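(* Let $A\in M_2(\mathbb{Z})$ be an expanding matrix whose characteristic polynomial is $x^2+3$ or $x^2-3$, let $k\in\mathbb{Z}\setminus\{0\}$, and let $v\in\mathbb{R}^2$ be such that $\{v,Av\}$ is linearly independent. Let $\mathcal{D}=\{0,v,kAv\}$. Then $T(A,\mathcal{D})$ is connected if and only if $k=\pm1$.
   Context: A real square matrix is expanding if all its eigenvalues have modulus strictly larger than $1$. For an expanding matrix $A\in M_n(\mathbb{Z})$ and a finite set $\mathcal{D}\subset\mathbb{R}^n$ with $|\mathcal D|=|\det A|$, the self-affine set $T(A,\mathcal{D})$ is the unique nonempty compact set $T$ with $AT=T+\mathcal{D}$; equivalently $T=\{\sum_{i=1}^\infty A^{-i}d_{j_i}: d_{j_i}\in\mathcal{D}\}$. *)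

From Stdlib Require Import Reals ZArith.
Open Scope R_scope.

Record mat2 := Mat2 { m11 : Z; m12 : Z; m21 : Z; m22 : Z }.

Definition vec := (R * R)%type.
Definition vadd (p q : vec) : vec := (fst p + fst q, snd p + snd q).
Definition vscale (c : R) (p : vec) : vec := (c * fst p, c * snd p).
Definition vzero : vec := (0, 0).

Definition mapply (A : mat2) (p : vec) : vec :=
  (IZR (m11 A) * fst p + IZR (m12 A) * snd p,
   IZR (m21 A) * fst p + IZR (m22 A) * snd p).

Definition mdet (A : mat2) : Z := (m11 A * m22 A - m12 A * m21 A)%Z.
Definition mtr (A : mat2) : Z := (m11 A + m22 A)%Z.

(* action of the real inverse matrix A^{-1} = adj(A)/det(A) *)
Definition minv_apply (A : mat2) (p : vec) : vec :=
  ((IZR (m22 A) * fst p - IZR (m12 A) * snd p) / IZR (mdet A),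
   (- IZR (m21 A) * fst p + IZR (m11 A) * snd p) / IZR (mdet A)).

Definition minv_pow (A : mat2) (i : nat) (p : vec) : vec :=
  Nat.iter i (minv_apply A) p.

(* characteristic polynomial det(xI - A) = x^2 - tr(A) x + det(A), as a real function *)
Definition charpoly (A : mat2) (x : R) : R :=
  x ^ 2 - IZR (mtr A) * x + IZR (mdet A).

(* complex number re + i im is a root of the characteristic polynomial
   (real and imaginary parts of z^2 - tr z + det written out) *)
Definition is_eigenvalue (A : mat2) (re im : R) : Prop :=
  re ^ 2 - im ^ 2 - IZR (mtr A) * re + IZR (mdet A) = 0 /\
  2 * re * im - IZR (mtr A) * im = 0.

Definition expanding (A : mat2) : Prop :=
  forall re im : R, is_eigenvalue A re im -> sqrt (re ^ 2 + im ^ 2) > 1.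

Definition lin_indep2 (u w : vec) : Prop :=
  forall a b : R, vadd (vscale a u) (vscale b w) = vzero -> a = 0 /\ b = 0.

Fixpoint psum (A : mat2) (d : nat -> vec) (n : nat) : vec :=
  match n with
  | O => vzero
  | S m => vadd (psum A d m) (minv_pow A (S m) (d (S m)))
  end.

Definition self_affine (A : mat2) (D : vec -> Prop) (x : vec) : Prop :=
  exists d : nat -> vec, (forall i, D (d i)) /\
    Un_cv (fun n => fst (psum A d n)) (fst x) /\
    Un_cv (fun n => snd (psum A d n)) (snd x).

Definition dist2 (p q : vec) : R :=
  sqrt ((fst p - fst q) ^ 2 + (snd p - snd q) ^ 2).

Definition open2 (U : vec -> Prop) : Prop :=
  forall p, U p -> exists eps, eps > 0 /\ forall q, dist2 p q < eps -> U q.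

Definition connected2 (S : vec -> Prop) : Prop :=
  ~ exists U V : vec -> Prop,
      open2 U /\ open2 V /\
      (forall x, S x -> U x \/ V x) /\
      (exists x, S x /\ U x) /\ (exists x, S x /\ V x) /\
      (forall x, S x -> U x -> V x -> False).

Definition digits (A : mat2) (v : vec) (k : Z) (x : vec) : Prop :=
  x = vzero \/ x = v \/ x = vscale (IZR k) (mapply A v).

From Stdlib Require Import Reals ZArith Lra Lia List Classical ClassicalEpsilon.
Import ListNotations.
Open Scope R_scope.

(* Since tr A = 0, A^2 = q I with q = -det A = -3 or 3, so in the basis
   {v, Av} the inverse A^{-1} becomes the explicit map
   ell (c1, c2) = (c2, c1 / q) and the digits become 0, (1, 0), (0, k).
   The proof studies this model attractor T and transfers the result along
   the linear coordinate map, which preserves connectedness. *)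

Definition vsub (p p' : vec) : vec := (fst p - fst p', snd p - snd p').

Definition Nv (p : vec) : R := Rabs (fst p) + Rabs (snd p).

Lemma Nv_nonneg p : 0 <= Nv p.
Proof. unfold Nv; pose proof (Rabs_pos (fst p)); pose proof (Rabs_pos (snd p)); lra. Qed.

Lemma Nv_vadd p p' : Nv (vadd p p') <= Nv p + Nv p'.
Proof.
  unfold Nv, vadd; simpl.
  pose proof (Rabs_triang (fst p) (fst p')); pose proof (Rabs_triang (snd p) (snd p')); lra.
Qed.

Lemma Nv_vscale c p : Nv (vscale c p) = Rabs c * Nv p.
Proof. unfold Nv, vscale; simpl; rewrite !Rabs_mult; ring. Qed.

Lemma Nv_opp p : Nv (vscale (-1) p) = Nv p.
Proof. rewrite Nv_vscale, Rabs_left by lra; ring. Qed.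

Lemma Nv_le_vsub p p' : Nv p <= Nv p' + Nv (vsub p p').
Proof.
  replace p with (vadd p' (vsub p p')) at 1
    by (destruct p, p'; unfold vadd, vsub; simpl; f_equal; ring).
  apply Nv_vadd.
Qed.

Lemma dist2_le_Nv p p' : dist2 p p' <= Nv (vsub p p').
Proof.
  unfold dist2, Nv, vsub; cbn [fst snd].
  set (a := fst p - fst p'); set (b := snd p - snd p').
  pose proof (Rabs_pos a); pose proof (Rabs_pos b).
  rewrite <- (sqrt_pow2 (Rabs a + Rabs b)) by lra.
  apply sqrt_le_1_alt; rewrite <- (pow2_abs a), <- (pow2_abs b); nra.
Qed.

Lemma fst_le_dist2 p p' : Rabs (fst p - fst p') <= dist2 p p'.
Proof.
  unfold dist2; rewrite <- (sqrt_pow2 (Rabs (fst p - fst p'))) by apply Rabs_pos.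
  apply sqrt_le_1_alt; rewrite pow2_abs; pose proof (pow2_ge_0 (snd p - snd p')); lra.
Qed.

Lemma snd_le_dist2 p p' : Rabs (snd p - snd p') <= dist2 p p'.
Proof.
  unfold dist2; rewrite <- (sqrt_pow2 (Rabs (snd p - snd p'))) by apply Rabs_pos.
  apply sqrt_le_1_alt; rewrite pow2_abs; pose proof (pow2_ge_0 (fst p - fst p')); lra.
Qed.

Definition lin2 (a b c d : R) (p : vec) : vec :=
  (a * fst p + b * snd p, c * fst p + d * snd p).

Lemma lin2_vadd a b c d p p' :
  lin2 a b c d (vadd p p') = vadd (lin2 a b c d p) (lin2 a b c d p').
Proof. unfold lin2, vadd; simpl; f_equal; ring. Qed.

Lemma lin2_lipschitz a b c d p p' :
  dist2 (lin2 a b c d p) (lin2 a b c d p')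
  <= (Rabs a + Rabs b + Rabs c + Rabs d) * dist2 p p'.
Proof.
  eapply Rle_trans; [apply dist2_le_Nv|]. unfold Nv, vsub, lin2; simpl.
  set (x := fst p - fst p'); set (y := snd p - snd p').
  replace (a * fst p + b * snd p - (a * fst p' + b * snd p')) with (a * x + b * y) by (unfold x, y; ring).
  replace (c * fst p + d * snd p - (c * fst p' + d * snd p')) with (c * x + d * y) by (unfold x, y; ring).
  pose proof (Rabs_triang (a * x) (b * y)); pose proof (Rabs_triang (c * x) (d * y)).
  rewrite !Rabs_mult in *.
  pose proof (fst_le_dist2 p p') as Hx; pose proof (snd_le_dist2 p p') as Hy; fold x y in Hx, Hy.
  pose proof (Rabs_pos a); pose proof (Rabs_pos b); pose proof (Rabs_pos c); pose proof (Rabs_pos d).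
  nra.
Qed.

Definition vcv (u : nat -> vec) (l : vec) : Prop :=
  Un_cv (fun n => fst (u n)) (fst l) /\ Un_cv (fun n => snd (u n)) (snd l).

Lemma cv_const c : Un_cv (fun _ => c) c.
Proof. intros e He; exists O; intros; unfold R_dist; rewrite Rminus_diag, Rabs_R0; lra. Qed.

Lemma vcv_affine a b c d e u l :
  vcv u l -> vcv (fun n => vadd (lin2 a b c d (u n)) e) (vadd (lin2 a b c d l) e).
Proof.
  intros [Hfst Hsnd]; unfold vadd, lin2; split; simpl;
    repeat apply CV_plus; try apply CV_mult; auto; apply cv_const.
Qed.

Lemma vcv_lin2 a b c d u l : vcv u l -> vcv (fun n => lin2 a b c d (u n)) (lin2 a b c d l).
Proof.
  intros [Hfst Hsnd]; unfold lin2; split; simpl;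
    apply CV_plus; apply CV_mult; auto; apply cv_const.
Qed.

Lemma vcv_ext u u' l : (forall n, u n = u' n) -> vcv u l -> vcv u' l.
Proof.
  intros E [Hfst Hsnd]; split; intros e He;
    [destruct (Hfst e He) as [N HN] | destruct (Hsnd e He) as [N HN]];
    exists N; intros n Hn; rewrite <- E; auto.
Qed.

Lemma vcv_shift u l : vcv u l -> vcv (fun n => u (S n)) l.
Proof.
  intros [Hfst Hsnd]; split; intros e He;
    [destruct (Hfst e He) as [N HN] | destruct (Hsnd e He) as [N HN]];
    exists N; intros n Hn; apply HN; lia.
Qed.

Lemma geom_small C e : 0 < e -> exists N, forall n, (N <= n)%nat -> C * (2/3)^n < e.
Proof.
  intros He. set (C' := Rabs C + 1).
  assert (HC' : 0 < C') by (unfold C'; pose proof (Rabs_pos C); lra).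
  destruct (pow_lt_1_zero (2/3)) with (y := e / C') as [N HN].
  { rewrite Rabs_pos_eq; lra. } { apply Rdiv_lt_0_compat; lra. }
  exists N; intros n Hn. specialize (HN n Hn).
  assert (Hp : 0 <= (2/3)^n) by (apply pow_le; lra).
  rewrite Rabs_pos_eq in HN by exact Hp.
  assert (C * (2/3)^n <= C' * (2/3)^n)
    by (apply Rmult_le_compat_r; [exact Hp|]; unfold C'; pose proof (Rle_abs C); lra).
  assert (C' * (2/3)^n < e).
  { apply (Rmult_lt_compat_l C') in HN; [|exact HC'].
    replace (C' * (e / C')) with e in HN by (field; lra); exact HN. }
  lra.
Qed.

Lemma vcv_of_geom u l C : (forall n, Nv (vsub (u n) l) <= C * (2/3)^n) -> vcv u l.
Proof.
  intros H; split; intros e He; destruct (geom_small C e He) as [N HN];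
    exists N; intros n Hn; specialize (H n); specialize (HN n Hn);
    unfold R_dist, Nv, vsub in *; simpl in *;
    [pose proof (Rabs_pos (snd (u n) - snd l)) | pose proof (Rabs_pos (fst (u n) - fst l))]; lra.
Qed.

Lemma vcv_close u l : vcv u l -> forall e, 0 < e -> exists N, forall n, (N <= n)%nat ->
  Nv (vsub l (u n)) < e.
Proof.
  intros [Hfst Hsnd] e He.
  destruct (Hfst (e/2)) as [N1 HN1]; [lra|]. destruct (Hsnd (e/2)) as [N2 HN2]; [lra|].
  exists (N1 + N2)%nat; intros n Hn.
  specialize (HN1 n ltac:(lia)); specialize (HN2 n ltac:(lia)); unfold R_dist in *.
  unfold Nv, vsub; simpl.
  rewrite <- (Rabs_Ropp (fst l - _)), <- (Rabs_Ropp (snd l - _)).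
  replace (- (fst l - fst (u n))) with (fst (u n) - fst l) by ring.
  replace (- (snd l - snd (u n))) with (snd (u n) - snd l) by ring. lra.
Qed.

Lemma vcv_bound u l B : vcv u l -> (forall n, Nv (u n) <= B) -> Nv l <= B.
Proof.
  intros Hu HB. destruct (Rle_dec (Nv l) B) as [|Hgt]; auto. exfalso.
  destruct (vcv_close u l Hu (Nv l - B)) as [N HN]; [lra|].
  pose proof (Nv_le_vsub l (u N)); specialize (HN N (le_n _)); specialize (HB N); lra.
Qed.

Lemma vcv_of_cauchy u C :
  (forall n m, (n <= m)%nat -> Nv (vsub (u m) (u n)) <= C * (2/3)^n) -> exists l, vcv u l.
Proof.
  intros H.
  assert (Hcs : forall e, 0 < e -> exists N, forall n m, (N <= n)%nat -> (N <= m)%nat ->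
             Nv (vsub (u n) (u N)) + Nv (vsub (u m) (u N)) < e).
  { intros e He. destruct (geom_small (2 * C) e He) as [N HN]. exists N; intros n m Hn Hm.
    pose proof (H N n Hn); pose proof (H N m Hm); specialize (HN N (le_n _)); lra. }
  assert (Hcrit : forall f : vec -> R, (forall p, Rabs (f p) <= Nv p) ->
             (forall p p', f (vsub p p') = f p - f p') -> Cauchy_crit (fun n => f (u n))).
  { intros f Hf Hlin e He. destruct (Hcs e He) as [N HN]. exists N; intros n m Hn Hm.
    specialize (HN n m Hn Hm). unfold R_dist.
    replace (f (u n) - f (u m)) with (f (vsub (u n) (u N)) - f (vsub (u m) (u N)))
      by (rewrite !Hlin; ring).
    eapply Rle_lt_trans; [apply Rabs_triang|]. rewrite Rabs_Ropp.
    pose proof (Hf (vsub (u n) (u N))); pose proof (Hf (vsub (u m) (u N))); lra. }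
  destruct (R_complete _ (Hcrit fst ltac:(intros; unfold Nv; pose proof (Rabs_pos (snd p)); lra)
                                        ltac:(reflexivity))) as [l1 Hl1].
  destruct (R_complete _ (Hcrit snd ltac:(intros; unfold Nv; pose proof (Rabs_pos (fst p)); lra)
                                        ltac:(reflexivity))) as [l2 Hl2].
  exists (l1, l2); split; assumption.
Qed.

Section Model.

Variables q k : R.
Hypothesis Hq : 3 <= Rabs q.

(* The contraction [ell] is A^{-1} written in the basis {v, Av}: when
   tr A = 0 we have A^2 = q with q = -det A, so A^{-1} sends
   c1 v + c2 Av to c2 v + (c1/q) Av. *)
Definition ell : vec -> vec := lin2 0 1 (/ q) 0.
Definition elln (n : nat) : vec -> vec := Nat.iter n ell.

Lemma q_nonzero : q <> 0.
Proof. intros E; rewrite E, Rabs_R0 in Hq; lra. Qed.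

Ltac vec_eq := unfold vadd, vscale, vsub, vzero, ell, lin2;
  apply injective_projections; simpl; field; apply q_nonzero.

Lemma elln_vadd n p p' : elln n (vadd p p') = vadd (elln n p) (elln n p').
Proof. induction n as [|n IH]; [reflexivity|]. simpl; rewrite IH; apply lin2_vadd. Qed.

Lemma ell_ell p : ell (ell p) = vscale (/ q) p.
Proof. vec_eq. Qed.

Lemma Nv_ell p : Nv (ell p) <= Nv p.
Proof.
  unfold Nv, ell, lin2; simpl. rewrite !Rmult_0_l, Rmult_1_l, !Rplus_0_l, Rplus_0_r.
  rewrite Rabs_mult, Rabs_inv.
  assert (/ Rabs q <= 1) by (rewrite <- Rinv_1; apply Rinv_le_contravar; lra).
  pose proof (Rabs_pos (fst p)); pose proof (Rabs_pos (snd p)); nra.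
Qed.

(* [ell] is a weak contraction whose square contracts by 1/|q| <= 1/3, so
   its iterates decay at the rate (2/3)^n. *)
Lemma Nv_elln n p : Nv (elln n p) <= (3/2 * Nv p) * (2/3)^n.
Proof.
  pose proof (Nv_nonneg p).
  enough (Hpair : forall m, Nv (elln m p) <= (3/2 * Nv p) * (2/3)^m /\
                           Nv (elln (S m) p) <= (3/2 * Nv p) * (2/3)^(S m)) by apply Hpair.
  clear n. induction m as [|m IH].
  - pose proof (Nv_ell p). simpl; split; lra.
  - destruct IH as [IH1 IH2]. split; [exact IH2|].
    change (elln (S (S m)) p) with (ell (ell (elln m p))).
    rewrite ell_ell, Nv_vscale, Rabs_inv.
    assert (/ Rabs q <= / 3) by (apply Rinv_le_contravar; lra).
    pose proof (Nv_nonneg (elln m p)); pose proof (pow_le (2/3) m).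
    simpl. nra.
Qed.

(* The cylinder of level n through [a] is the set of points a + ell^n t with t
   in the attractor; this identity says that the cylinder of level S n
   through a + ell^(S n) d is its sub-cylinder of first digit d. *)
Lemma cylinder_child a n d s :
  vadd (vadd a (elln (S n) d)) (elln (S n) s) = vadd a (elln n (ell (vadd d s))).
Proof.
  change (elln n (ell (vadd d s))) with (Nat.iter n ell (ell (vadd d s))).
  rewrite <- Nat.iter_succ_r. fold (elln (S n)). rewrite elln_vadd. vec_eq.
Qed.

(* Digits of the model system: the coordinates of 0, v and kAv. *)
Definition digit (p : vec) : Prop := p = (0, 0) \/ p = (1, 0) \/ p = (0, k).

Lemma digit_Nv d : digit d -> Nv d <= 1 + Rabs k.
Proof.
  intros [ -> | [ -> | -> ] ]; unfold Nv; simpl; rewrite ?Rabs_R0, ?Rabs_R1;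
    pose proof (Rabs_pos k); lra.
Qed.

Fixpoint dsum (c : nat -> vec) (n : nat) : vec :=
  match n with
  | O => vzero
  | S m => vadd (dsum c m) (elln (S m) (c (S m)))
  end.

Definition attractor (t : vec) : Prop :=
  exists c : nat -> vec, (forall i, digit (c i)) /\ vcv (dsum c) t.

Section Digits.
Variable c : nat -> vec.
Hypothesis Hc : forall i, digit (c i).

Lemma dsum_tail m n :
  Nv (vsub (dsum c (m + n)) (dsum c n))
  <= 3 * (1 + Rabs k) * ((2/3)^n - (2/3)^(m + n)).
Proof.
  induction m as [|m IH].
  - replace (vsub (dsum c (0 + n)) (dsum c n)) with vzero by vec_eq.
    unfold Nv; simpl; rewrite Rabs_R0; lra.
  - change (dsum c (S m + n)) with (vadd (dsum c (m + n)) (elln (S (m + n)) (c (S (m + n))))).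
    replace (vsub (vadd (dsum c (m + n)) (elln (S (m + n)) (c (S (m + n))))) (dsum c n))
      with (vadd (vsub (dsum c (m + n)) (dsum c n)) (elln (S (m + n)) (c (S (m + n)))))
      by vec_eq.
    eapply Rle_trans; [apply Nv_vadd|].
    pose proof (Nv_elln (S (m + n)) (c (S (m + n)))).
    pose proof (digit_Nv _ (Hc (S (m + n)))).
    pose proof (pow_le (2/3) (m + n)). change (S m + n)%nat with (S (m + n)). simpl in *. nra.
Qed.

Lemma dsum_cauchy n m : (n <= m)%nat ->
  Nv (vsub (dsum c m) (dsum c n)) <= 3 * (1 + Rabs k) * (2/3)^n.
Proof.
  intros Hnm. replace m with ((m - n) + n)%nat by lia.
  pose proof (dsum_tail (m - n) n). pose proof (pow_le (2/3) (m - n + n)).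
  pose proof (Rabs_pos k). nra.
Qed.

Lemma dsum_bound n : Nv (dsum c n) <= 3 * (1 + Rabs k).
Proof.
  pose proof (dsum_cauchy 0 n (Nat.le_0_l n)) as Hn.
  replace (vsub (dsum c n) (dsum c 0)) with (dsum c n) in Hn by vec_eq.
  simpl in Hn; lra.
Qed.

Lemma attractor_limit : exists t, attractor t /\ vcv (dsum c) t.
Proof.
  destruct (vcv_of_cauchy (dsum c) (3 * (1 + Rabs k)) dsum_cauchy) as [t Ht].
  exists t; split; [exists c|]; auto.
Qed.

Lemma dsum_shift n : dsum c (S n) = ell (vadd (c 1%nat) (dsum (fun i => c (S i)) n)).
Proof.
  induction n as [|n IH].
  - simpl. vec_eq.
  - change (dsum c (S (S n))) with (vadd (dsum c (S n)) (ell (elln (S n) (c (S (S n)))))).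
    rewrite IH. simpl dsum. unfold ell; rewrite <- lin2_vadd. f_equal. vec_eq.
Qed.

End Digits.

Lemma attractor_bound t : attractor t -> Nv t <= 3 * (1 + Rabs k).
Proof. intros [c [Hc Ht]]. exact (vcv_bound _ _ _ Ht (dsum_bound c Hc)). Qed.

Lemma attractor_decomp t : attractor t ->
  exists d s, digit d /\ attractor s /\ t = ell (vadd d s).
Proof.
  intros [c [Hc Ht]].
  set (e := vscale (-1) (c 1%nat)).
  exists (c 1%nat), (vadd (lin2 0 q 1 0 t) e). split; [auto|]. split.
  - exists (fun i => c (S i)). split; [auto|].
    apply vcv_ext with (fun n => vadd (lin2 0 q 1 0 (dsum c (S n))) e).
    + intros n; rewrite dsum_shift; unfold e. vec_eq.
    + apply vcv_affine, vcv_shift, Ht.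
  - unfold e. vec_eq.
Qed.

(* Any bounded set that is covered by its own images [ell (d + .)] lies in
   the attractor: following predecessors gives a digit expansion. *)
Lemma attractor_of_invariant (P : vec -> Prop) B :
  (forall x, P x -> Nv x <= B) ->
  (forall x, P x -> exists d y, digit d /\ P y /\ x = ell (vadd d y)) ->
  forall x, P x -> attractor x.
Proof.
  intros HB Hinv x0 Hx0.
  assert (Hsel : forall x, {p : vec * vec | P x -> digit (fst p) /\ P (snd p) /\
                                             x = ell (vadd (fst p) (snd p))}).
  { intros x. apply constructive_indefinite_description.
    destruct (classic (P x)) as [Px|nPx].
    - destruct (Hinv x Px) as [d [y H]]. exists (d, y); auto.
    - exists (vzero, vzero); intros; contradiction. }
  set (pred := fun x => proj1_sig (Hsel x)).
  set (o := fun n => Nat.iter n (fun x => snd (pred x)) x0).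
  set (c := fun n => match n with O => vzero | S m => fst (pred (o m)) end).
  assert (Ho : forall n, P (o n)) by
    (induction n as [|n IH]; [exact Hx0|exact (proj1 (proj2 (proj2_sig (Hsel _) IH)))]).
  assert (Hstep : forall n, o n = ell (vadd (c (S n)) (o (S n))))
    by (intros n; exact (proj2 (proj2 (proj2_sig (Hsel _) (Ho n))))).
  assert (Hc : forall i, digit (c i)).
  { intros [|i]; [left; reflexivity|exact (proj1 (proj2_sig (Hsel _) (Ho i)))]. }
  assert (Htel : forall n, x0 = vadd (dsum c n) (elln n (o n))).
  { induction n as [|n IH]; [simpl; vec_eq|].
    change (dsum c (S n)) with (vadd (dsum c n) (elln (S n) (c (S n)))).
    rewrite cylinder_child, <- Hstep; exact IH. }
  exists c; split; [exact Hc|].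
  apply vcv_of_geom with (3/2 * B). intros n.
  replace (vsub (dsum c n) x0) with (vscale (-1) (elln n (o n))) by (rewrite (Htel n); vec_eq).
  rewrite Nv_opp.
  eapply Rle_trans; [apply Nv_elln|].
  apply Rmult_le_compat_r; [apply pow_le; lra|]. specialize (HB _ (Ho n)); lra.
Qed.

Lemma attractor_image d s : digit d -> attractor s -> attractor (ell (vadd d s)).
Proof.
  intros Hd Hs.
  apply (attractor_of_invariant
           (fun x => attractor x \/ exists d s, digit d /\ attractor s /\ x = ell (vadd d s))
           (1 + Rabs k + 3 * (1 + Rabs k))).
  - intros x [Hx|[d' [s' [Hd' [Hs' ->]]]]].
    + pose proof (attractor_bound x Hx); pose proof (Rabs_pos k); lra.
    + eapply Rle_trans; [apply Nv_ell|]. eapply Rle_trans; [apply Nv_vadd|].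
      pose proof (digit_Nv d' Hd'); pose proof (attractor_bound s' Hs'); lra.
  - intros x [Hx|[d' [s' [Hd' [Hs' ->]]]]].
    + destruct (attractor_decomp x Hx) as [d' [s' [Hd' [Hs' ->]]]].
      exists d', s'; auto.
    + exists d', s'; auto.
  - right; eauto.
Qed.

Definition follow (ds : list vec) (t : vec) : vec :=
  fold_right (fun d x => ell (vadd d x)) t ds.

Lemma Nv_follow ds t : Forall digit ds ->
  Nv (follow ds t) <= Nv t + INR (length ds) * (1 + Rabs k).
Proof.
  induction 1 as [|d ds Hd Hds IH]; simpl follow; simpl length.
  - simpl; lra.
  - rewrite S_INR. eapply Rle_trans; [apply Nv_ell|]. eapply Rle_trans; [apply Nv_vadd|].
    pose proof (digit_Nv d Hd); lra.
Qed.

Lemma attractor_cycle ds t : ds <> [] -> Forall digit ds -> follow ds t = t -> attractor t.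
Proof.
  intros Hne Hds Hfix.
  apply (attractor_of_invariant
           (fun x => exists pre suf, ds = pre ++ suf /\ suf <> [] /\ x = follow suf t)
           (Nv t + INR (length ds) * (1 + Rabs k))).
  - intros x [pre [suf [-> [_ ->]]]].
    apply Forall_app in Hds as [_ Hsuf].
    eapply Rle_trans; [apply Nv_follow, Hsuf|].
    rewrite length_app, plus_INR. pose proof (pos_INR (length pre)); pose proof (Rabs_pos k). nra.
  - intros x [pre [suf [Eds [Hsuf ->]]]].
    destruct suf as [|d suf]; [contradiction|].
    assert (Hd : digit d) by (rewrite Eds in Hds; apply Forall_app in Hds as [_ H]; inversion H; auto).
    exists d, (follow suf t). split; [exact Hd|]. split; [|reflexivity].
    destruct suf as [|d' suf].
    + exists [], ds. simpl. auto.
    + exists (pre ++ [d]), (d' :: suf). rewrite <- app_assoc. simpl. split; [exact Eds|].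
      split; [discriminate|reflexivity].
  - exists [], ds. auto.
Qed.

Lemma attractor_origin : attractor (0, 0).
Proof.
  apply (attractor_cycle [(0, 0)]); [discriminate|repeat constructor; left; reflexivity|].
  unfold follow; simpl; vec_eq.
Qed.

Lemma attractor_cylinder c n t : (forall i, digit (c i)) -> attractor t ->
  attractor (vadd (dsum c n) (elln n t)).
Proof.
  intros Hc. revert t. induction n as [|n IH]; intros t Ht.
  - replace (vadd (dsum c 0) (elln 0 t)) with t by (simpl; vec_eq). exact Ht.
  - change (dsum c (S n)) with (vadd (dsum c n) (elln (S n) (c (S n)))).
    rewrite cylinder_child. apply IH, attractor_image; auto.
Qed.

End Model.

Section Connectedness.

Variables q k : R.
Hypothesis Hq : 3 <= Rabs q.
Notation T := (attractor q k).

Definition prefix (a : vec) (n : nat) : Prop :=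
  forall t, T t -> T (vadd a (elln q n t)).

Definition meets (W : vec -> Prop) (a : vec) (n : nat) : Prop :=
  exists t, T t /\ W (vadd a (elln q n t)).

Lemma cylinders_shrink (a : nat -> vec) z (W : vec -> Prop) :
  vcv a z -> open2 W -> W z -> exists n, forall t, T t -> W (vadd (a n) (elln q n t)).
Proof.
  intros Ha HW Wz. destruct (HW z Wz) as [eps [Heps Hball]].
  destruct (vcv_close a z Ha (eps/2)) as [N1 HN1]; [lra|].
  destruct (geom_small (3/2 * (3 * (1 + Rabs k))) (eps/2)) as [N2 HN2]; [lra|].
  exists (N1 + N2)%nat; intros t Ht. apply Hball.
  set (n := (N1 + N2)%nat).
  specialize (HN1 n ltac:(unfold n; lia)); specialize (HN2 n ltac:(unfold n; lia)).
  eapply Rle_lt_trans; [apply dist2_le_Nv|].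
  replace (vsub z (vadd (a n) (elln q n t))) with (vadd (vsub z (a n)) (vscale (-1) (elln q n t)))
    by (unfold vsub, vadd, vscale; apply injective_projections; simpl; ring).
  eapply Rle_lt_trans; [apply Nv_vadd|]. rewrite Nv_opp.
  pose proof (Nv_elln q Hq n t). pose proof (attractor_bound q k Hq t Ht).
  pose proof (pow_le (2/3) n). nra.
Qed.

(* The edge condition: for every digit d, the piece ell(d + T) meets the
   piece ell(0 + T), because d + s = 0 + s' for some s, s' in T. *)
Definition edge_condition : Prop :=
  forall d, digit k d -> exists s s', T s /\ T s' /\ vadd d s = s'.

Section Separation.

Hypothesis Hedge : edge_condition.

Variables U V : vec -> Prop.
Hypothesis HU : open2 U.
Hypothesis HV : open2 V.
Hypothesis Hcover : forall x, T x -> U x \/ V x.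
Hypothesis Hdisj : forall x, T x -> U x -> V x -> False.

Definition mixed (a : vec) (n : nat) : Prop := meets U a n /\ meets V a n.

(* If no child cylinder meets both [W] and [O], the side [W] of a cylinder
   spreads, through the edges, to all of its child cylinder of digit 0. *)
Lemma side_spreads (W O : vec -> Prop) a n :
  (forall x, T x -> W x \/ O x) -> prefix a n ->
  (forall d, digit k d -> ~ (meets W (vadd a (elln q (S n) d)) (S n) /\
                             meets O (vadd a (elln q (S n) d)) (S n))) ->
  meets W a n -> forall s, T s -> W (vadd a (elln q n (ell q (vadd (0, 0) s)))).
Proof.
  intros Hwo Hpre Hchild [t [Ht Wt]].
  assert (Hmono : forall d s, digit k d -> T s -> W (vadd a (elln q n (ell q (vadd d s)))) ->
                  forall s', T s' -> W (vadd a (elln q n (ell q (vadd d s'))))).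
  { intros d s Hd Hs Ws s' Hs'.
    destruct (Hwo _ (Hpre _ (attractor_image q k Hq d s' Hd Hs'))) as [W'|O']; [exact W'|].
    exfalso; apply (Hchild d Hd); split;
      [exists s | exists s']; rewrite (cylinder_child q Hq); auto. }
  destruct (attractor_decomp q k Hq t Ht) as [d1 [s1 [Hd1 [Hs1 ->]]]].
  destruct (Hedge d1 Hd1) as [s [s' [Hs [Hs' Hss']]]].
  apply (Hmono (0, 0) s'); [left; reflexivity|exact Hs'|].
  replace (vadd (0, 0) s') with (vadd d1 s)
    by (rewrite Hss'; destruct s'; unfold vadd; simpl; f_equal; ring).
  apply (Hmono d1 s1); auto.
Qed.

(* Every mixed cylinder has a mixed child: otherwise the child of digit 0
   would lie in both U and V. *)
Lemma mixed_child a n : prefix a n -> mixed a n ->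
  exists d, digit k d /\ mixed (vadd a (elln q (S n) d)) (S n).
Proof.
  intros Hpre [MU MV]. apply NNPP; intros Hno.
  assert (Hno' : forall d, digit k d -> ~ mixed (vadd a (elln q (S n) d)) (S n))
    by (intros d Hd Hm; apply Hno; exists d; auto).
  pose proof (attractor_origin q k Hq) as Horigin.
  apply (Hdisj (vadd a (elln q n (ell q (vadd (0, 0) (0, 0)))))).
  - apply Hpre, attractor_image; auto. left; reflexivity.
  - apply (side_spreads U V a n Hcover Hpre); auto.
  - apply (side_spreads V U a n); auto.
    + intros x Hx; destruct (Hcover x Hx); auto.
    + intros d Hd [HmV HmU]; apply (Hno' d Hd); split; auto.
Qed.

Fixpoint greedy (next : vec -> nat -> vec) (n : nat) : vec :=
  match n with
  | O => vzero
  | S m => vadd (greedy next m) (elln q (S m) (next (greedy next m) m))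
  end.

Lemma mixed_sequence : mixed vzero 0 ->
  exists u, (forall i, digit k (u i)) /\ forall n, mixed (dsum q u n) n.
Proof.
  intros Hmixed0.
  assert (Hsel : forall p : vec * nat, {d | digit k d /\ (prefix (fst p) (snd p) ->
                   mixed (fst p) (snd p) -> mixed (vadd (fst p) (elln q (S (snd p)) d)) (S (snd p)))}).
  { intros [a n]; apply constructive_indefinite_description; simpl.
    destruct (classic (prefix a n /\ mixed a n)) as [[Hp Hm]|Hn].
    - destruct (mixed_child a n Hp Hm) as [d [Hd Hmd]]; exists d; auto.
    - exists (0, 0); split; [left; reflexivity|]; intros; exfalso; auto. }
  set (next := fun a n => proj1_sig (Hsel (a, n))).
  set (u := fun n => match n with O => vzero | S m => next (greedy next m) m end).
  assert (Hu : forall i, digit k (u i)).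
  { intros [|i]; [left; reflexivity|exact (proj1 (proj2_sig (Hsel _)))]. }
  assert (Hgreedy : forall n, greedy next n = dsum q u n)
    by (induction n as [|n IH]; simpl; [reflexivity|rewrite IH; reflexivity]).
  exists u; split; [exact Hu|]. induction n as [|n IH]; [exact Hmixed0|].
  change (dsum q u (S n)) with (vadd (dsum q u n) (elln q (S n) (next (greedy next n) n))).
  rewrite Hgreedy. apply (proj2 (proj2_sig (Hsel (dsum q u n, n)))); [|exact IH].
  intros t Ht; apply attractor_cylinder; auto.
Qed.

(* The limit of such an expansion lies in U or V, which is open, so a small
   mixed cylinder lies on one side: a contradiction. *)
Lemma no_separation : (exists x, T x /\ U x) -> (exists x, T x /\ V x) -> False.
Proof.
  intros [xu [Txu Uxu]] [xv [Txv Vxv]].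
  assert (E : forall x, vadd vzero (elln q 0 x) = x)
    by (intros x; unfold vadd, vzero; apply injective_projections; simpl; ring).
  destruct mixed_sequence as [u [Hu Hmixed]];
    [split; [exists xu | exists xv]; rewrite E; auto|].
  destruct (attractor_limit q k Hq u Hu) as [z [Hz Hlim]].
  destruct (Hcover z Hz) as [Uz|Vz].
  - destruct (cylinders_shrink _ z U Hlim HU Uz) as [n Hn].
    destruct (Hmixed n) as [_ [t [Ht Vt]]].
    apply (Hdisj _ (attractor_cylinder q k Hq u n t Hu Ht) (Hn t Ht) Vt).
  - destruct (cylinders_shrink _ z V Hlim HV Vz) as [n Hn].
    destruct (Hmixed n) as [[t [Ht Ut]] _].
    apply (Hdisj _ (attractor_cylinder q k Hq u n t Hu Ht) Ut (Hn t Ht)).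
Qed.

End Separation.

Theorem attractor_connected : edge_condition -> connected2 T.
Proof.
  intros Hedge [U [V [HU [HV [Hcover [HmU [HmV Hdisj]]]]]]].
  exact (no_separation Hedge U V HU HV Hcover Hdisj HmU HmV).
Qed.

End Connectedness.

Lemma halfplanes_separate (S : vec -> Prop) c :
  (forall x, S x -> fst x <> c) -> (exists x, S x /\ fst x < c) -> (exists x, S x /\ c < fst x) ->
  ~ connected2 S.
Proof.
  intros Hmiss Hleft Hright Hconn. apply Hconn.
  exists (fun p => fst p < c), (fun p => c < fst p). repeat split; auto.
  - intros p Hp. exists (c - fst p); split; [lra|].
    intros p' Hd; pose proof (fst_le_dist2 p p'); pose proof (Rle_abs (fst p' - fst p)) as Habs.
    rewrite Rabs_minus_sym in Habs. lra.
  - intros p Hp. exists (fst p - c); split; [lra|].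
    intros p' Hd; pose proof (fst_le_dist2 p p');
      pose proof (Rle_abs (fst p - fst p')). lra.
  - intros x Hx. specialize (Hmiss x Hx). lra.
  - intros x _ H1 H2; lra.
Qed.

Section Disconnectedness.

Variables q k : R.
Hypothesis Hq : 3 <= Rabs q.
Notation T := (attractor q k).

Lemma snd_two_steps t : T t -> exists d1 d2 s, digit k d1 /\ digit k d2 /\ T s /\
  snd t = (fst d1 + snd d2 + snd s) / q.
Proof.
  intros Ht.
  destruct (attractor_decomp q k Hq t Ht) as [d1 [t' [Hd1 [Ht' ->]]]].
  destruct (attractor_decomp q k Hq t' Ht') as [d2 [s [Hd2 [Hs ->]]]].
  exists d1, d2, s; repeat split; auto.
  unfold ell, lin2, vadd; simpl. field. apply (q_nonzero q Hq).
Qed.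

Lemma snd_interval y0 y1 :
  (forall d1 d2 y eps, digit k d1 -> digit k d2 -> 0 <= eps -> y0 - eps <= y <= y1 + eps ->
     y0 - eps / 3 <= (fst d1 + snd d2 + y) / q <= y1 + eps / 3) ->
  forall t, T t -> y0 <= snd t <= y1.
Proof.
  intros Hstep.
  set (Q := fun eps => forall t, T t -> y0 - eps <= snd t <= y1 + eps).
  assert (Qstep : forall eps, 0 <= eps -> Q eps -> Q (eps / 3)).
  { intros eps He HQ t Ht. destruct (snd_two_steps t Ht) as [d1 [d2 [s [Hd1 [Hd2 [Hs ->]]]]]].
    apply Hstep; auto. }
  set (M := 3 * (1 + Rabs k) + Rabs y0 + Rabs y1).
  assert (HM : 0 <= M)
    by (unfold M; pose proof (Rabs_pos k); pose proof (Rabs_pos y0); pose proof (Rabs_pos y1); lra).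
  assert (Q0 : Q M).
  { intros t Ht. pose proof (attractor_bound q k Hq t Ht) as Hb. unfold Nv in Hb.
    pose proof (Rabs_pos (fst t)); pose proof (Rabs_pos y0); pose proof (Rabs_pos y1).
    pose proof (Rle_abs (snd t)) as Hs1; pose proof (Rle_abs (- snd t)) as Hs2.
    pose proof (Rle_abs y0) as Hy0; pose proof (Rle_abs (- y1)) as Hy1.
    rewrite Rabs_Ropp in Hs2, Hy1. unfold M; lra. }
  assert (Qn : forall n, Q (M * (1/3)^n)).
  { induction n as [|n IH]; [simpl; rewrite Rmult_1_r; exact Q0|].
    replace (M * (1/3)^(S n)) with (M * (1/3)^n / 3) by (simpl; field).
    apply Qstep; [apply Rmult_le_pos; [exact HM|apply pow_le; lra]|exact IH]. }
  intros t Ht.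
  assert (Hsmall : forall e, 0 < e -> exists n, M * (1/3)^n < e).
  { intros e He. destruct (geom_small M e He) as [n Hn]. exists n.
    specialize (Hn n (le_n _)).
    assert ((1/3)^n <= (2/3)^n) by (apply pow_incr; lra).
    nra. }
  split; apply Rnot_lt_le; intros Hout.
  - destruct (Hsmall (y0 - snd t)) as [n Hn]; [lra|]. destruct (Qn n t Ht); lra.
  - destruct (Hsmall (snd t - y1)) as [n Hn]; [lra|]. destruct (Qn n t Ht); lra.
Qed.

End Disconnectedness.

Lemma Rabs_q q : q = 3 \/ q = -3 -> 3 <= Rabs q.
Proof. intros [-> | ->]; [rewrite Rabs_pos_eq | rewrite Rabs_left]; lra. Qed.

Lemma snd_range q k m M : q = 3 \/ q = -3 ->
  (forall d1 d2, digit k d1 -> digit k d2 -> m <= fst d1 + snd d2 <= M) ->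
  exists y0, forall t, attractor q k t -> y0 <= snd t <= y0 + (M - m) / 2.
Proof.
  intros Hq3 Hsum.
  pose proof (Rabs_q q Hq3) as Hq.
  destruct Hq3 as [-> | ->].
  - exists (m / 2). apply (snd_interval 3 k Hq).
    intros d1 d2 y eps Hd1 Hd2 He Hy; pose proof (Hsum d1 d2 Hd1 Hd2); lra.
  - exists ((m - 3 * M) / 8). apply (snd_interval (-3) k Hq).
    intros d1 d2 y eps Hd1 Hd2 He Hy; pose proof (Hsum d1 d2 Hd1 Hd2); lra.
Qed.

(* Disconnectedness criterion: if the second coordinates of T fit in an
   interval shorter than |k|, then the first coordinates of the pieces
   ell(D + T) split into two groups separated by a gap. *)
Theorem attractor_disconnected q k y0 w : 3 <= Rabs q -> w < Rabs k ->
  (forall t, attractor q k t -> y0 <= snd t <= y0 + w) -> ~ connected2 (attractor q k).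
Proof.
  intros Hq Hw Hrange.
  pose proof (attractor_origin q k Hq) as H0.
  assert (Hk0 : attractor q k (k, 0)).
  { replace (k, 0) with (ell q (vadd (0, k) (0, 0)))
      by (unfold ell, lin2, vadd; apply injective_projections; simpl; ring).
    apply attractor_image; auto. right; right; reflexivity. }
  pose proof (Hrange _ H0) as Hr0; simpl in Hr0.
  apply (halfplanes_separate _ (y0 + (w + k) / 2)).
  - intros t Ht. destruct (attractor_decomp q k Hq t Ht) as [d [s [Hd [Hs ->]]]].
    pose proof (Hrange s Hs).
    unfold ell, lin2, vadd; simpl.
    destruct (Rcase_abs k); [rewrite Rabs_left in Hw|rewrite Rabs_right in Hw]; auto;
      destruct Hd as [-> | [-> | ->]]; simpl; lra.
  - destruct (Rcase_abs k); [rewrite Rabs_left in Hw|rewrite Rabs_right in Hw]; auto;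
      [exists (k, 0) | exists (0, 0)]; simpl; split; auto; lra.
  - destruct (Rcase_abs k); [rewrite Rabs_left in Hw|rewrite Rabs_right in Hw]; auto;
      [exists (0, 0) | exists (k, 0)]; simpl; split; auto; lra.
Qed.

Ltac cycle_point Hq ds :=
  apply (attractor_cycle _ _ Hq ds);
  [ discriminate
  | repeat constructor; unfold digit;
    first [ left; reflexivity | right; left; reflexivity | right; right; reflexivity ]
  | unfold follow, ell, lin2, vadd; simpl; apply injective_projections; simpl; field ].

Ltac edge Hq s ds s' ds' :=
  exists s, s'; split; [cycle_point Hq ds | split; [cycle_point Hq ds' |]];
  unfold vadd; apply injective_projections; simpl; field.

Ltac trivial_edge Hq :=
  exists (0, 0), (0, 0); split; [apply attractor_origin, Hq|];
  split; [apply attractor_origin, Hq|]; unfold vadd; simpl; f_equal; ring.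

(* The edge condition holds in the four connected cases; the witnesses are
   periodic points with short digit cycles. *)
Lemma edges_3_1 : edge_condition 3 1.
Proof.
  assert (Hq : 3 <= Rabs 3) by (apply Rabs_q; auto).
  intros d [-> | [-> | ->]]; [trivial_edge Hq| |].
  - edge Hq (1/2, 0) [(0, 0); (1, 0)] (3/2, 0) [(0, 1); (0, 0)].
  - edge Hq (0, 0) [(0, 0)] (0, 1) [(1, 0); (0, 1)].
Qed.

Lemma edges_3_m1 : edge_condition 3 (-1).
Proof.
  assert (Hq : 3 <= Rabs 3) by (apply Rabs_q; auto).
  intros d [-> | [-> | ->]]; [trivial_edge Hq| |].
  - edge Hq (-1, 0) [(0, -1); (1, 0)] (0, 0) [(0, 0)].
  - edge Hq (0, 1/2) [(1, 0); (0, 0)] (0, -1/2) [(0, 0); (0, -1)].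
Qed.

Lemma edges_m3_1 : edge_condition (-3) 1.
Proof.
  assert (Hq : 3 <= Rabs (-3)) by (apply Rabs_q; auto).
  intros d [-> | [-> | ->]]; [trivial_edge Hq| |].
  - edge Hq (-1/4, -1/4) [(1, 0); (1, 0)] (3/4, -1/4) [(0, 1); (0, 1)].
  - edge Hq (0, -3/4) [(1, 0); (0, 1); (0, 0); (0, 0)] (0, 1/4) [(0, 0); (0, 0); (1, 0); (0, 1)].
Qed.

Lemma edges_m3_m1 : edge_condition (-3) (-1).
Proof.
  assert (Hq : 3 <= Rabs (-3)) by (apply Rabs_q; auto).
  intros d [-> | [-> | ->]]; [trivial_edge Hq| |].
  - edge Hq (-1, 0) [(0, -1); (1, 0)] (0, 0) [(0, 0)].
  - edge Hq (0, 1/2) [(0, 0); (0, -1); (1, 0); (0, 0)] (0, -1/2) [(1, 0); (0, 0); (0, 0); (0, -1)].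
Qed.

(* For |k| >= 2 the attractor is disconnected: the two-step digit sums lie
   in an interval [m, M] with (M - m)/2 = (1 + |k|)/2 < |k|. *)
Lemma attractor_disconnected_large q (k : Z) : q = 3 \/ q = -3 -> (k <= -2 \/ 2 <= k)%Z ->
  ~ connected2 (attractor q (IZR k)).
Proof.
  intros Hq3 Hk. pose proof (Rabs_q q Hq3) as Hq.
  destruct Hk as [Hk | Hk]; apply IZR_le in Hk.
  - destruct (snd_range q (IZR k) (IZR k) 1 Hq3) as [y0 Hy0];
      [intros d1 d2 [-> | [-> | ->]] [-> | [-> | ->]]; simpl; lra|].
    apply (attractor_disconnected q (IZR k) y0 ((1 - IZR k) / 2) Hq); auto. rewrite Rabs_left; lra.
  - destruct (snd_range q (IZR k) 0 (1 + IZR k) Hq3) as [y0 Hy0];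
      [intros d1 d2 [-> | [-> | ->]] [-> | [-> | ->]]; simpl; lra|].
    apply (attractor_disconnected q (IZR k) y0 ((1 + IZR k - 0) / 2) Hq); auto. rewrite Rabs_right; lra.
Qed.

Theorem model_connected_iff q (k : Z) : q = 3 \/ q = -3 -> k <> 0%Z ->
  (connected2 (attractor q (IZR k)) <-> (k = 1%Z \/ k = (-1)%Z)).
Proof.
  intros Hq3 Hk. split.
  - intros Hconn. apply NNPP; intros Hk1.
    apply (attractor_disconnected_large q k Hq3); [lia | exact Hconn].
  - pose proof (Rabs_q q Hq3) as Hq.
    intros [-> | ->]; apply (attractor_connected _ _ Hq); destruct Hq3 as [-> | ->];
      [exact edges_3_1 | exact edges_m3_1 | exact edges_3_m1 | exact edges_m3_m1].
Qed.

Lemma open2_preimage (f : vec -> vec) C (U : vec -> Prop) :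
  (forall p p', dist2 (f p) (f p') <= C * dist2 p p') -> open2 U -> open2 (fun x => U (f x)).
Proof.
  intros Hf HU p Up. destruct (HU (f p) Up) as [eps [Heps Hball]].
  pose proof (Rabs_pos C).
  exists (eps / (Rabs C + 1)); split; [apply Rdiv_lt_0_compat; lra|].
  intros p' Hd. apply Hball.
  assert (Hd0 : 0 <= dist2 p p') by apply sqrt_pos.
  assert (Hlt : (Rabs C + 1) * dist2 p p' < eps).
  { apply (Rmult_lt_compat_l (Rabs C + 1)) in Hd; [|lra].
    replace ((Rabs C + 1) * (eps / (Rabs C + 1))) with eps in Hd by (field; lra). exact Hd. }
  pose proof (Hf p p'); pose proof (Rle_abs C). nra.
Qed.

Lemma connected2_image (f : vec -> vec) C (S : vec -> Prop) :
  (forall p p', dist2 (f p) (f p') <= C * dist2 p p') ->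
  connected2 S -> connected2 (fun y => exists x, S x /\ y = f x).
Proof.
  intros Hf HS [U [V [HU [HV [Hcov [[y1 [[x1 [Sx1 ->]] U1]] [[y2 [[x2 [Sx2 ->]] V2]] Hdis]]]]]]].
  apply HS. exists (fun x => U (f x)), (fun x => V (f x)).
  repeat split; try (eapply open2_preimage; eauto).
  - intros x Sx; apply Hcov; eauto.
  - exists x1; auto.
  - exists x2; auto.
  - intros x Sx; apply Hdis; eauto.
Qed.

Lemma connected2_ext (S1 S2 : vec -> Prop) :
  (forall x, S1 x <-> S2 x) -> (connected2 S1 <-> connected2 S2).
Proof.
  intros H. unfold connected2.
  split; intros Hc [U [V [HU [HV [Hcov [[x [Sx Ux]] [[y [Sy Vy]] Hd]]]]]]]; apply Hc;
    exists U, V; repeat split; auto; try (intros z Sz; apply Hcov || apply Hd; apply H; auto);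
    [exists x | exists y | exists x | exists y]; split; auto; apply H; auto.
Qed.

Definition Phi (v w : vec) : vec -> vec := lin2 (fst v) (fst w) (snd v) (snd w).
Definition cross (v w : vec) : R := fst v * snd w - snd v * fst w.
Definition Phiinv (v w : vec) : vec -> vec :=
  lin2 (snd w / cross v w) (- fst w / cross v w) (- snd v / cross v w) (fst v / cross v w).

Lemma cross_nonzero v w : lin_indep2 v w -> cross v w <> 0.
Proof.
  intros Hli Hc. unfold cross in Hc. destruct v as [v1 v2], w as [w1 w2]; simpl in Hc.
  destruct (Hli w2 (- v2)) as [Hw2 Hv2]; [unfold vadd, vscale, vzero; simpl; f_equal; nra|].
  destruct (Hli w1 (- v1)) as [Hw1 Hv1]; [unfold vadd, vscale, vzero; simpl; f_equal; nra|].
  destruct (Hli 1 0) as [H10 _]; [unfold vadd, vscale, vzero; simpl; f_equal; nra|]. lra.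
Qed.

Lemma Phi_Phiinv v w p : cross v w <> 0 -> Phi v w (Phiinv v w p) = p.
Proof. intros H; unfold Phi, Phiinv, lin2, cross in *; apply injective_projections; simpl; field; auto. Qed.

Lemma Phiinv_Phi v w c : cross v w <> 0 -> Phiinv v w (Phi v w c) = c.
Proof. intros H; unfold Phi, Phiinv, lin2, cross in *; apply injective_projections; simpl; field; auto. Qed.

Lemma connected2_Phi_iff v w (S : vec -> Prop) : cross v w <> 0 ->
  (connected2 S <-> connected2 (fun y => exists x, S x /\ y = Phi v w x)).
Proof.
  intros Hc. split; intros HS.
  - exact (connected2_image (Phi v w) _ S (lin2_lipschitz _ _ _ _) HS).
  - pose proof (connected2_image (Phiinv v w) _ _ (lin2_lipschitz _ _ _ _) HS) as H.
    refine (proj1 (connected2_ext _ _ _) H). intros x; split.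
    + intros [y [[x' [Sx' ->]] ->]]. rewrite Phiinv_Phi; auto.
    + intros Sx. exists (Phi v w x); split; [eauto|]. rewrite Phiinv_Phi; auto.
Qed.

Section Transfer.

Variables (A : mat2) (v : vec) (k : Z).
Hypothesis Htr : IZR (m11 A) + IZR (m22 A) = 0.
Hypothesis Hdet : IZR (mdet A) <> 0.
Hypothesis Hcross : cross v (mapply A v) <> 0.

Let w := mapply A v.
Let q := - IZR (mdet A).

(* In the basis {v, Av}, A^{-1} acts as [ell q]: trace zero gives
   A^2 = -det A, hence A^{-1} = A / q. *)
Lemma minv_apply_Phi c : minv_apply A (Phi v w c) = Phi v w (ell q c).
Proof.
  unfold q, w, mdet in *. rewrite minus_IZR, !mult_IZR in *.
  assert (E : IZR (m22 A) = - IZR (m11 A)) by lra.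
  unfold minv_apply, Phi, mapply, ell, lin2, mdet; simpl.
  rewrite minus_IZR, !mult_IZR, E in *.
  apply injective_projections; simpl; field; auto.
Qed.

Lemma minv_pow_Phi n c : minv_pow A n (Phi v w c) = Phi v w (elln q n c).
Proof.
  induction n as [|n IH]; [reflexivity|].
  unfold minv_pow, elln in *; simpl. rewrite IH. apply minv_apply_Phi.
Qed.

Lemma psum_Phi d c n : (forall i, d i = Phi v w (c i)) -> psum A d n = Phi v w (dsum q c n).
Proof.
  intros Hd. induction n as [|n IH].
  - simpl; unfold Phi, lin2, vzero; simpl; f_equal; ring.
  - change (psum A d (S n)) with (vadd (psum A d n) (minv_pow A (S n) (d (S n)))).
    rewrite IH, Hd, minv_pow_Phi. unfold Phi; rewrite <- lin2_vadd; reflexivity.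
Qed.

Lemma digits_Phi c : digit (IZR k) c -> digits A v k (Phi v w c).
Proof.
  unfold digits, Phi, lin2, vzero, vscale; intros [-> | [-> | ->]]; simpl;
    [left | right; left | right; right]; apply injective_projections; simpl; ring.
Qed.

Lemma digits_Phiinv p : digits A v k p -> digit (IZR k) (Phiinv v w p).
Proof.
  unfold cross in Hcross. unfold digits, digit, Phiinv, lin2, vzero, vscale, cross, w.
  intros [-> | [-> | ->]]; simpl; [left | right; left | right; right];
    apply injective_projections; simpl; field; auto.
Qed.

Lemma self_affine_Phi x :
  self_affine A (digits A v k) x <-> exists t, attractor q (IZR k) t /\ x = Phi v w t.
Proof.
  split.
  - intros [d [Hd Hx]]. set (c := fun i => Phiinv v w (d i)).
    assert (Hdc : forall i, d i = Phi v w (c i)) by (intros i; unfold c; rewrite Phi_Phiinv; auto).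
    exists (Phiinv v w x). split; [|rewrite Phi_Phiinv; auto].
    exists c. split; [intros i; apply digits_Phiinv, Hd|].
    apply vcv_ext with (fun n => Phiinv v w (psum A d n)); [|apply vcv_lin2, Hx].
    intros n. rewrite (psum_Phi d c n Hdc), Phiinv_Phi; auto.
  - intros [t [[c [Hc Ht]] ->]]. exists (fun i => Phi v w (c i)).
    split; [intros i; apply digits_Phi, Hc|].
    apply (vcv_ext (fun n => Phi v w (dsum q c n))); [intros n; rewrite (psum_Phi _ c n); auto|].
    apply vcv_lin2, Ht.
Qed.

End Transfer.

Lemma trace_det_of_charpoly A :
  ((forall x : R, charpoly A x = x ^ 2 + 3) \/ (forall x : R, charpoly A x = x ^ 2 - 3)) ->
  IZR (m11 A) + IZR (m22 A) = 0 /\ (- IZR (mdet A) = 3 \/ - IZR (mdet A) = -3).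
Proof.
  intros Hchar.
  destruct Hchar as [H | H]; pose proof (H 0) as H0; pose proof (H 1) as H1;
    unfold charpoly, mtr in H0, H1; rewrite plus_IZR in H1; simpl in H0, H1; lra.
Qed.

(* The main theorem. *)
Theorem mainTheorem2 (A : mat2) (k : Z) (v : vec) :
  expanding A ->
  ((forall x : R, charpoly A x = x ^ 2 + 3) \/ (forall x : R, charpoly A x = x ^ 2 - 3)) ->
  k <> 0%Z ->
  lin_indep2 v (mapply A v) ->
  (connected2 (self_affine A (digits A v k)) <-> (k = 1%Z \/ k = (-1)%Z)).
Proof.
  intros _ Hchar Hk Hli.
  destruct (trace_det_of_charpoly A Hchar) as [Htr Hq].
  assert (Hdet : IZR (mdet A) <> 0) by lra.
  pose proof (cross_nonzero _ _ Hli) as Hcross.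
  rewrite (connected2_ext _ _ (self_affine_Phi A v k Htr Hdet Hcross)).
  rewrite <- (connected2_Phi_iff _ _ _ Hcross).
  exact (model_connected_iff _ k Hq Hk).
Qed.
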